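(* Let $\mathit{VI}$ be a finite set of variables with $\#\mathit{VI}=n$ and let $1\le k\le n$. Then for every $sh\in\mathit{SH}$, $\rho_{\mathit{TSD}_k}(sh^k)=sh^\star$.
   Context: $\mathit{SG}=\wp(\mathit{VI})\setminus\{\emptyset\}$ and $\mathit{SH}=\wp(\mathit{SG})$. For $sh\in\mathit{SH}$: the star-union is $sh^\star=\{S\in\mathit{SG}\mid \exists sh'\subseteq sh: S=\bigcup sh'\}$; for $j\ge1$ the $j$-self-union is $sh^j=\{S\in\mathit{SG}\mid \exists sh'\subseteq sh: \#sh'\le j,\ S=\bigcup sh'\}$. Also $\rho_{\mathit{TSD}_k}(sh)=\{\,S\in\mathit{SG}\mid \forall T\subseteq S:\ \#T<k\implies S=\bigcup\{U\in sh\mid T\subseteq U\subseteq S\}\,\}$. *)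

From mathcomp Require Import all_boot.
Set Implicit Arguments. Unset Strict Implicit. Unset Printing Implicit Defensive.

Definition SG (VI : finType) : {set {set VI}} := [set S : {set VI} | S != set0].

Definition star_union (VI : finType) (sh : {set {set VI}}) : {set {set VI}} :=
  [set S : {set VI} | (S \in SG VI) &&
     [exists sh' : {set {set VI}}, (sh' \subset sh) && (S == \bigcup_(U in sh') U)]].

Definition self_union (VI : finType) (j : nat) (sh : {set {set VI}}) : {set {set VI}} :=
  [set S : {set VI} | (S \in SG VI) &&
     [exists sh' : {set {set VI}},
        [&& sh' \subset sh, #|sh'| <= j & S == \bigcup_(U in sh') U]]].

Definition rho_TSD (VI : finType) (k : nat) (sh : {set {set VI}}) : {set {set VI}} :=
  [set S : {set VI} | (S \in SG VI) &&
     [forall T : {set VI}, (T \subset S) ==> (#|T| < k) ==>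
        (S == \bigcup_(U in sh | (T \subset U) && (U \subset S)) U)]].

From mathcomp Require Import all_boot.
Set Implicit Arguments. Unset Strict Implicit. Unset Printing Implicit Defensive.

(* Taking [T = set0] (allowed as [k >= 1]) shows that every [S] kept by
   [rho_TSD k] is the union of the members of [sh^k] below it, hence of the
   members of [sh] below it, so [S] is in [sh^*].  Conversely, if [S] is in
   [sh^*] and [T] is a subset of [S] with fewer than [k] points, then for each
   [x] in [S] the at most [k] points of [x |: T] are covered by at most [k]
   members of [sh] contained in [S]; their union lies in [sh^k], contains [T]
   and [x], and is contained in [S]. *)

Lemma bigcup_small_subcover (T : finType) (A : {set {set T}}) (X : {set T}) :
  X \subset \bigcup_(V in A) V ->
  exists2 B : {set {set T}}, B \subset A &
    (#|B| <= #|X|) && (X \subset \bigcup_(V in B) V).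
Proof.
move=> XA; pose f t := odflt set0 [pick V in A | t \in V].
have fP t : t \in X -> (f t \in A) && (t \in f t).
  move=> /(subsetP XA) /bigcupP [W WA tW]; rewrite /f.
  by case: pickP => [V /andP [-> ->] // | /(_ W)]; rewrite WA tW.
exists (f @: X).
  by apply/subsetP => _ /imsetP [t tX ->]; case/andP: (fP t tX).
rewrite leq_imset_card /=; apply/subsetP => t tX; apply/bigcupP.
by exists (f t); [exact: imset_f | case/andP: (fP t tX)].
Qed.

Section SharingSets.

Variables (VI : finType) (sh : {set {set VI}}).

Lemma star_unionP (S : {set VI}) :
  reflect (S != set0 /\ S = \bigcup_(V in sh | V \subset S) V)
          (S \in star_union sh).
Proof.
rewrite !inE; apply: (iffP andP) => -[S0 SE]; split => //.
  case/existsP: SE => sh' /andP [sh'sh /eqP ->].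
  apply/eqP; rewrite eqEsubset; apply/andP; split; last first.
    by apply/bigcupsP => V /andP [].
  apply/bigcupsP => V sh'V; apply: (bigcup_sup V).
  by rewrite (subsetP sh'sh) ?(bigcup_sup V).
apply/existsP; exists [set V in sh | V \subset S]; apply/andP; split.
  by apply/subsetP => V; rewrite inE => /andP [].
by rewrite {1}SE; apply/eqP/eq_bigl => V; rewrite inE.
Qed.

Lemma self_union_sub_star (j : nat) : self_union j sh \subset star_union sh.
Proof.
apply/subsetP => S; rewrite !inE => /andP [->].
case/existsP => sh' /and3P [sh'sh _ SE].
by apply/existsP; exists sh'; rewrite sh'sh.
Qed.

Lemma self_union_cover (j : nat) (S X : {set VI}) :
  S \in star_union sh -> X \subset S -> X != set0 -> #|X| <= j ->
  exists2 U, U \in self_union j sh & (X \subset U) && (U \subset S).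
Proof.
move=> /star_unionP [_ SE] XS X0 Xj.
have : X \subset \bigcup_(V in [set V in sh | V \subset S]) V.
  apply: (subset_trans XS); rewrite {1}SE.
  by apply/bigcupsP => V VS; apply: bigcup_sup; rewrite inE.
case/bigcup_small_subcover => B BA /andP [BX XB].
have Bsh : B \subset sh.
  by apply/subsetP => V /(subsetP BA); rewrite inE => /andP [].
exists (\bigcup_(V in B) V); last first.
  by rewrite XB; apply/bigcupsP => V /(subsetP BA); rewrite inE => /andP [].
rewrite !inE; apply/andP; split.
  by case/set0Pn: X0 => x xX; apply/set0Pn; exists x; apply: (subsetP XB).
by apply/existsP; exists B; rewrite Bsh (leq_trans BX Xj) eqxx.
Qed.

Lemma rho_TSD_cover (k : nat) (F : {set {set VI}}) (S : {set VI}) :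
  0 < k -> S \in rho_TSD k F -> S = \bigcup_(U in F | U \subset S) U.
Proof.
move=> k_gt0; rewrite inE => /andP [_ /forallP /(_ set0)].
rewrite sub0set cards0 k_gt0 /= => /eqP SE.
by rewrite {1}SE; apply: eq_bigl => U; rewrite sub0set.
Qed.

Lemma rho_TSD_sub_star (k : nat) (F : {set {set VI}}) :
  0 < k -> F \subset star_union sh -> rho_TSD k F \subset star_union sh.
Proof.
move=> k_gt0 Fstar; apply/subsetP => S Srho; apply/star_unionP; split.
  by move: Srho; rewrite !inE => /andP [].
apply/eqP; rewrite eqEsubset; apply/andP; split; last first.
  by apply/bigcupsP => V /andP [].
rewrite {1}(rho_TSD_cover k_gt0 Srho); apply/bigcupsP => U /andP [FU US].
move/star_unionP: (subsetP Fstar U FU) => [_ ->].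
apply/bigcupsP => V /andP [shV VU]; apply: (bigcup_sup V).
by rewrite shV (subset_trans VU US).
Qed.

Lemma star_sub_rho_TSD_self_union (k : nat) :
  star_union sh \subset rho_TSD k (self_union k sh).
Proof.
apply/subsetP => S Sstar; rewrite inE; apply/andP; split.
  by case/star_unionP: Sstar; rewrite inE.
apply/forallP => T; apply/implyP => TS; apply/implyP => Tk.
rewrite eqEsubset; apply/andP; split; last first.
  by apply/bigcupsP => U /andP [_ /andP [_ US]].
apply/subsetP => x xS.
have xTk : #|x |: T| <= k.
  by rewrite cardsU1; apply: leq_trans Tk; rewrite -add1n leq_add2r leq_b1.
have [||U Uk /andP [xTU US]] := self_union_cover Sstar _ _ xTk.
- by rewrite subUset sub1set xS TS.
- by apply/set0Pn; exists x; rewrite setU11.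
apply/bigcupP; exists U; last by apply: (subsetP xTU); rewrite setU11.
by rewrite Uk US andbT; apply: subset_trans xTU; apply: subsetUr.
Qed.

End SharingSets.

Theorem proposition3p13 (VI : finType) (n k : nat) (sh : {set {set VI}}) :
  #|VI| = n -> 1 <= k <= n -> sh \subset SG VI ->
  rho_TSD k (self_union k sh) = star_union sh.
Proof.
move=> _ /andP [k_gt0 _] _; apply/eqP; rewrite eqEsubset.
by rewrite rho_TSD_sub_star ?self_union_sub_star ?star_sub_rho_TSD_self_union.
Qed.
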